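(* Let $X\sim\mathrm{Binom}(n,\tfrac12)$. Then, as $n\to\infty$, with logarithms natural (units: nats), $$H(X)=\frac12\ln\frac{\pi e n}{2}-\frac1{12n^2}+O(n^{-3}),$$ $$V(X)=\frac12-\frac1{2n}-\frac1{2n^2}+O(n^{-3}),$$ where $H(X)=\mathbb E[\ln\frac1{P_X(X)}]$ is the entropy and $V(X)=\mathrm{Var}[\ln\frac1{P_X(X)}]$ is the varentropy. *)

From Stdlib Require Import Reals.
Open Scope R_scope.

Definition binom_half_pmf (n k : nat) : R := C n k / 2 ^ n.

Definition binom_half_info (n k : nat) : R := ln (/ binom_half_pmf n k).

Definition binom_half_entropy (n : nat) : R :=
  sum_f_R0 (fun k => binom_half_pmf n k * binom_half_info n k) n.

Definition binom_half_varentropy (n : nat) : R :=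
  sum_f_R0 (fun k => binom_half_pmf n k *
                     (binom_half_info n k - binom_half_entropy n) ^ 2) n.

From Stdlib Require Import Reals Lra Lia Psatz Factorial.
From Coquelicot Require Import Coquelicot.
From Stdlib Require Import List. Import ListNotations.
Open Scope R_scope.

(* Writing [k = n (1 + u) / 2], the information [ln (1/P(k)) = n ln 2 - ln C(n,k)] is expanded
   with Stirling's formula to error [O(m^-3)] (its constant identified through the Wallis
   integrals) and with the Taylor expansions of [(1+u) ln (1+u) + (1-u) ln (1-u)] and
   [ln (1 - u^2)].  This gives [ln (1/P(k)) = 1/2 ln (pi n / 2) + Q(n, u)] up to an error
   bounded by a polynomial in [u] and [1/n]; far from the centre ([u^2 > 1/4]) a crude bound
   [O(n)] is absorbed by the term [n^2 u^10] of that polynomial.  Since [n u] is the centred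
   binomial variable [2k - n], expectations of polynomials in [u] are combinations of its
   even central moments, which are polynomials in [n] computed exactly by induction; the
   error polynomial then has expectation [O(n^-3)], and the expectations of [Q] and [Q^2]
   give the stated expansions of [H] and [V]. *)

Lemma pow_even_abs u j : Rabs u ^ (2 * j) = u ^ (2 * j).
Proof. rewrite !pow_mult, pow2_abs. reflexivity. Qed.

Lemma pow_even_nonneg u j : 0 <= u ^ (2 * j).
Proof. rewrite pow_mult. apply pow_le, pow2_ge_0. Qed.

Lemma INR_ge_8 n : (8 <= n)%nat -> 8 <= INR n.
Proof. intros Hn. replace 8 with (INR 8) by (simpl; ring). apply le_INR, Hn. Qed.

Lemma pow_le_cube w j : 0 <= w <= 1 -> 0 <= w ^ (3 + j) <= w ^ 3.
Proof.
  intros Hw. split; [apply pow_le; lra|]. rewrite pow_add.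
  pose proof (pow_le w 3 ltac:(lra)).
  assert (w ^ j <= 1) by (rewrite <- (pow1 j); apply pow_incr; lra). nra.
Qed.

Lemma sq_sub_sq_bound g q e : Rabs (g - q) <= e -> Rabs (g^2 - q^2) <= e * (e + 2 * Rabs q).
Proof.
  intros H. replace (g^2 - q^2) with ((g - q) * ((g - q) + 2 * q)) by ring.
  rewrite Rabs_mult. apply Rmult_le_compat; try apply Rabs_pos; [exact H|].
  eapply Rle_trans; [apply Rabs_triang|]. rewrite Rabs_mult, (Rabs_pos_eq 2); lra.
Qed.

Lemma ln_le_sub1 y : 0 < y -> ln y <= y - 1.
Proof. intros Hy. pose proof (exp_ineq1_le (ln y)) as Hexp. rewrite exp_ln in Hexp by lra. lra. Qed.

(** * Taylor remainders *)

Lemma mvt_pow_bound (h h' : R -> R) (B : R) (k : nat) (y : R) : 0 <= B ->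
  (forall c, Rabs c <= Rabs y -> derivable_pt_lim h c (h' c)) ->
  (forall c, Rabs c <= Rabs y -> Rabs (h' c) <= B * Rabs c ^ k) ->
  h 0 = 0 -> Rabs (h y) <= B * Rabs y ^ S k.
Proof.
  intros HB Hd Hb H0.
  assert (Hbetween : forall c, Rmin 0 y <= c <= Rmax 0 y -> Rabs c <= Rabs y).
  { intros c [H1 H2]. unfold Rmin, Rmax in *.
    unfold Rabs; repeat destruct Rcase_abs; destruct (Rle_dec 0 y); lra. }
  destruct (MVT_abs h h' 0 y) as [c [Heq Hc]].
  { intros c Hc. apply Hd, Hbetween, Hc. }
  rewrite H0, !Rminus_0_r in Heq. rewrite Heq.
  specialize (Hbetween c Hc). specialize (Hb c Hbetween).
  assert (Rabs c ^ k <= Rabs y ^ k) by (apply pow_incr; split; [apply Rabs_pos | lra]).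
  assert (0 <= Rabs y) by apply Rabs_pos.
  assert (Rabs (h' c) <= B * Rabs y ^ k) by nra.
  simpl. nra.
Qed.

Lemma inv_one_sub_sq_le u : Rabs u <= /2 -> 0 < /(1 - u^2) <= 4/3.
Proof.
  intros Hu. apply Rabs_le_between in Hu.
  assert (u^2 <= /4) by nra.
  split; [apply Rinv_0_lt_compat; lra|].
  replace (4/3) with (/(3/4)) by field. apply Rinv_le_contravar; lra.
Qed.

Definition log_ratio_rem u := ln (1 + u) - ln (1 - u) - 2*u - 2*u^3/3 - 2*u^5/5.

Lemma log_ratio_rem_bound u : Rabs u <= /2 -> Rabs (log_ratio_rem u) <= 8/3 * Rabs u ^ 7.
Proof.
  intros Hu.
  apply (mvt_pow_bound _ (fun c => 2 * c^6 / (1 - c^2))); [lra| | |].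
  - intros c Hc. assert (Hc2 : Rabs c <= /2) by lra. apply Rabs_le_between in Hc2.
    apply is_derive_Reals. unfold log_ratio_rem.
    auto_derive; [repeat split; lra|]. field. repeat split; nra.
  - intros c Hc. pose proof (inv_one_sub_sq_le c ltac:(lra)) as Hi.
    replace (Rabs c ^ 6) with (c ^ 6) by (symmetry; apply (pow_even_abs c 3)).
    pose proof (pow_even_nonneg c 3 : 0 <= c ^ 6).
    rewrite Rabs_pos_eq by (apply Rmult_le_pos; lra).
    unfold Rdiv. nra.
  - unfold log_ratio_rem. rewrite Rplus_0_r, Rminus_0_r, ln_1. field.
Qed.

Definition sym_xlnx u := (1 + u) * ln (1 + u) + (1 - u) * ln (1 - u).
Definition sym_xlnx_rem u := sym_xlnx u - u^2 - u^4/6 - u^6/15.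

Lemma sym_xlnx_rem_bound u : Rabs u <= /2 -> Rabs (sym_xlnx_rem u) <= 8/3 * Rabs u ^ 8.
Proof.
  intros Hu.
  apply (mvt_pow_bound _ log_ratio_rem); [lra| | |].
  - intros c Hc. assert (Hc2 : Rabs c <= /2) by lra. apply Rabs_le_between in Hc2.
    apply is_derive_Reals. unfold sym_xlnx_rem, sym_xlnx, log_ratio_rem.
    auto_derive; [repeat split; lra|].
    replace (1 + - c) with (1 - c) by ring. field. lra.
  - intros c Hc. apply log_ratio_rem_bound. lra.
  - unfold sym_xlnx_rem, sym_xlnx. rewrite Rplus_0_r, Rminus_0_r, ln_1. field.
Qed.

Definition ln_one_sub_sq_rem u := ln (1 - u^2) + u^2 + u^4/2.

Lemma ln_one_sub_sq_rem_bound u :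
  Rabs u <= /2 -> Rabs (ln_one_sub_sq_rem u) <= 8/3 * Rabs u ^ 6.
Proof.
  intros Hu.
  apply (mvt_pow_bound _ (fun c => - (2 * c^5 / (1 - c^2)))); [lra| | |].
  - intros c Hc. assert (Hc2 : Rabs c <= /2) by lra. apply Rabs_le_between in Hc2.
    apply is_derive_Reals. unfold ln_one_sub_sq_rem.
    auto_derive; [nra|]. field. nra.
  - intros c Hc. pose proof (inv_one_sub_sq_le c ltac:(lra)) as Hi.
    unfold Rdiv. rewrite Rabs_Ropp, !Rabs_mult, <- RPow_abs.
    rewrite (Rabs_pos_eq 2), (Rabs_pos_eq (/ _)) by lra.
    assert (0 <= Rabs c ^ 5) by (apply pow_le, Rabs_pos). nra.
  - unfold ln_one_sub_sq_rem. replace (1 - 0^2) with 1 by ring. rewrite ln_1. field.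
Qed.

(** * Wallis integrals *)

Definition sin_pow (n : nat) (x : R) := sin x ^ n.
Definition wallis (n : nat) : R := RInt (sin_pow n) 0 (PI/2).

Lemma sin_pow_continuous n x : continuous (sin_pow n) x.
Proof.
  apply (ex_derive_continuous (V := R_NormedModule)). unfold sin_pow. auto_derive. auto.
Qed.

Lemma ex_RInt_sin_pow n : ex_RInt (sin_pow n) 0 (PI/2).
Proof.
  apply (ex_RInt_continuous (V := R_CompleteNormedModule)). intros; apply sin_pow_continuous.
Qed.

Lemma wallis_0 : wallis 0 = PI/2.
Proof.
  unfold wallis, sin_pow. simpl. rewrite RInt_const. unfold scal; simpl. unfold mult; simpl. ring.
Qed.

Lemma wallis_1 : wallis 1 = 1.
Proof.
  unfold wallis. apply is_RInt_unique.
  replace 1 with (minus ((fun x => - cos x) (PI/2)) ((fun x => - cos x) 0)).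
  2:{ unfold minus, plus, opp; simpl. rewrite cos_PI2, cos_0. ring. }
  apply (is_RInt_derive (V := R_CompleteNormedModule) (fun x => - cos x)).
  - intros x _. unfold sin_pow. auto_derive; auto. ring.
  - intros; apply sin_pow_continuous.
Qed.

(* Integration by parts, done as FTC for the antiderivative [- cos x * sin x ^ (n+1)]. *)
Lemma wallis_rec n : INR (S (S n)) * wallis (S (S n)) = INR (S n) * wallis n.
Proof.
  set (a := INR (S (S n))). set (b := INR (S n)).
  assert (Hftc : is_RInt (fun x => a * sin_pow (S (S n)) x - b * sin_pow n x) 0 (PI/2)
                   (minus ((fun x => - cos x * sin x ^ S n) (PI/2))
                          ((fun x => - cos x * sin x ^ S n) 0))).
  { apply (is_RInt_derive (V := R_CompleteNormedModule) (fun x => - cos x * sin x ^ S n)).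
    - intros x _. unfold sin_pow, a, b. auto_derive; auto.
      change (match n with 0%nat => 1 | S _ => INR n + 1 end) with (INR (S n)).
      rewrite !S_INR. pose proof (sin2_cos2 x) as Hs. unfold Rsqr in Hs.
      transitivity (sin x * sin x * sin x ^ n - (INR n + 1) * sin x ^ n * (cos x * cos x));
        [ring|].
      replace (cos x * cos x) with (1 - sin x * sin x) by lra. simpl. ring.
    - intros x _. apply (ex_derive_continuous (V := R_NormedModule)).
      unfold sin_pow. auto_derive. auto. }
  pose proof (is_RInt_minus _ _ _ _ _ _
    (is_RInt_scal _ _ _ a _ (RInt_correct _ _ _ (ex_RInt_sin_pow (S (S n)))))
    (is_RInt_scal _ _ _ b _ (RInt_correct _ _ _ (ex_RInt_sin_pow n)))) as Hlin.
  pose proof (eq_trans (eq_sym (is_RInt_unique _ _ _ _ Hftc)) (is_RInt_unique _ _ _ _ Hlin))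
    as E1.
  fold (wallis (S (S n))) (wallis n) in E1.
  revert E1. unfold minus, plus, opp, scal; simpl. unfold mult; simpl.
  rewrite cos_PI2, sin_0. lra.
Qed.

Lemma wallis_succ_le n : wallis (S n) <= wallis n.
Proof.
  pose proof PI_RGT_0.
  apply RInt_le; [lra | apply ex_RInt_sin_pow | apply ex_RInt_sin_pow |].
  intros x Hx. unfold sin_pow. simpl.
  assert (0 <= sin x) by (apply sin_ge_0; lra).
  assert (sin x <= 1) by (pose proof (SIN_bound x); lra).
  assert (0 <= sin x ^ n) by (apply pow_le; lra).
  nra.
Qed.

Fixpoint mid_binom (m : nat) : R :=
  match m with O => 1 | S m' => mid_binom m' * (2 * INR m' + 1) / (2 * INR m' + 2) end.

Lemma mid_binom_pos m : 0 < mid_binom m.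
Proof.
  induction m; simpl; [lra|]. pose proof (pos_INR m).
  apply Rdiv_lt_0_compat; [apply Rmult_lt_0_compat|]; lra.
Qed.

Lemma wallis_even m : wallis (2 * m) = PI/2 * mid_binom m.
Proof.
  induction m as [|m IH]; [simpl; rewrite wallis_0; ring|].
  replace (2 * S m)%nat with (S (S (2 * m))) by lia.
  pose proof (wallis_rec (2 * m)) as Hrec. rewrite IH, !S_INR, mult_INR in Hrec.
  replace (INR 2) with 2 in Hrec by (simpl; ring). pose proof (pos_INR m). simpl mid_binom.
  replace (2 * INR m + 2) with (2 * INR m + 1 + 1) by ring.
  apply (Rmult_eq_reg_l (2 * INR m + 1 + 1)); [|lra].
  rewrite Hrec. field. lra.
Qed.

Lemma wallis_odd m : wallis (S (2 * m)) = / ((2 * INR m + 1) * mid_binom m).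
Proof.
  induction m as [|m IH]; [simpl; rewrite wallis_1; field|].
  replace (S (2 * S m)) with (S (S (S (2 * m)))) by lia.
  pose proof (wallis_rec (S (2 * m))) as Hrec. rewrite IH, !S_INR, mult_INR in Hrec.
  replace (INR 2) with 2 in Hrec by (simpl; ring).
  pose proof (pos_INR m). pose proof (mid_binom_pos m).
  rewrite S_INR. simpl mid_binom.
  apply (Rmult_eq_reg_l (2 * INR m + 1 + 1 + 1)); [|lra].
  rewrite Hrec. field. lra.
Qed.

(* Wallis' squeeze [W(2m+2) <= W(2m+1) <= W(2m)] written in terms of [mid_binom]. *)
Lemma wallis_lower m : 2 <= PI * (2 * INR m + 1) * mid_binom m ^ 2.
Proof.
  pose proof (wallis_succ_le (2 * m)) as Hle. rewrite wallis_even, wallis_odd in Hle.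
  pose proof (mid_binom_pos m). pose proof (pos_INR m).
  apply (Rmult_le_compat_r ((2 * INR m + 1) * mid_binom m)) in Hle; [|nra].
  rewrite Rinv_l in Hle by nra. nra.
Qed.

Lemma wallis_upper m : PI * INR (S m) * mid_binom (S m) ^ 2 <= 1.
Proof.
  pose proof (wallis_succ_le (S (2 * m))) as Hle.
  replace (S (S (2 * m))) with (2 * S m)%nat in Hle by lia.
  rewrite wallis_even, wallis_odd in Hle.
  pose proof (mid_binom_pos m). pose proof (pos_INR m). pose proof PI_RGT_0.
  apply (Rmult_le_compat_r ((2 * INR m + 1) * mid_binom m)) in Hle; [|nra].
  rewrite Rinv_l in Hle by nra. rewrite S_INR. simpl mid_binom in *.
  replace (PI * (INR m + 1) * (mid_binom m * (2 * INR m + 1) / (2 * INR m + 2)) ^ 2)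
    with (PI / 2 * (mid_binom m * (2 * INR m + 1) / (2 * INR m + 2))
          * ((2 * INR m + 1) * mid_binom m)) by (field; lra).
  lra.
Qed.

(** * Stirling's formula *)

Definition ln_fact (m : nat) := ln (INR (fact m)).

Definition stirling_err (m : nat) :=
  ln_fact m - (INR m + /2) * ln (INR m) + INR m - /(12 * INR m).

Definition stirling_const := (ln 2 + ln PI) / 2.

Lemma ln_fact_S m : ln_fact (S m) = ln (INR m + 1) + ln_fact m.
Proof.
  unfold ln_fact. change (fact (S m)) with (S m * fact m)%nat.
  rewrite mult_INR, S_INR. apply ln_mult; [pose proof (pos_INR m); lra | apply INR_fact_lt_0].
Qed.

(* Here [x = 1/(2M+1)] and [r] is the remainder of [ln ((1+x)/(1-x))] after three terms. *)
Lemma stirling_step_core x r : 0 < x <= /5 -> Rabs r <= 8/3 * x^7 ->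
  0 <= x^4 / (3 * (1 - x^2)) - x^4/5 - r / (2*x) <= x^4/4.
Proof.
  intros Hx Hr. apply Rabs_le_between in Hr.
  assert (Hx2 : x^2 <= /25) by nra.
  assert (Hx4 : 0 < x^4) by (apply pow_lt; lra).
  assert (Hr2 : - (4/3 * x^6) <= r / (2*x) <= 4/3 * x^6).
  { assert (Hi : 0 < /(2*x)) by (apply Rinv_0_lt_compat; lra).
    replace (4/3 * x^6) with (8/3 * x^7 * /(2*x)) by (field; lra).
    unfold Rdiv. split; [rewrite Ropp_mult_distr_l|]; apply Rmult_le_compat_r; lra. }
  assert (Hinv : 1 <= /(1 - x^2) <= 25/24).
  { split; [rewrite <- Rinv_1 at 1 | replace (25/24) with (/(24/25)) by field];
      apply Rinv_le_contravar; nra. }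
  replace (x^4 / (3 * (1 - x^2))) with (x^4/3 * /(1 - x^2)) by (field; nra).
  assert (x^6 = x^4 * x^2) by ring.
  split; nra.
Qed.

Lemma inv_pow4_le_inv_cube_sub M : 0 < M -> /(M + 1)^4 <= /M^3 - /(M + 1)^3.
Proof.
  intros HM.
  replace (/M^3 - /(M + 1)^3)
    with (/(M + 1)^4 + (2*M^3 + 6*M^2 + 4*M + 1) / (M^3 * (M + 1)^4)) by (field; lra).
  assert (0 <= (2*M^3 + 6*M^2 + 4*M + 1) / (M^3 * (M + 1)^4)); [|lra].
  apply Rdiv_le_0_compat; [nra|]. apply Rmult_lt_0_compat; apply pow_lt; lra.
Qed.

Lemma stirling_err_step m : (2 <= m)%nat ->
  0 <= stirling_err (S m) - stirling_err m <= /INR m^3 - /INR (S m)^3.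
Proof.
  intros Hm. rewrite S_INR. set (M := INR m).
  assert (HM : 2 <= M) by (unfold M; replace 2 with (INR 2) by (simpl; ring); apply le_INR; lia).
  set (x := /(2*M + 1)).
  assert (Hx : 0 < x <= /5)
    by (split; unfold x; [apply Rinv_0_lt_compat | apply Rinv_le_contravar]; lra).
  assert (Hlog : ln (M + 1) - ln M = ln (1 + x) - ln (1 - x)).
  { replace (1 + x) with ((M + 1) * (2 / (2*M + 1))) by (unfold x; field; lra).
    replace (1 - x) with (M * (2 / (2*M + 1))) by (unfold x; field; lra).
    rewrite !ln_mult; try lra; apply Rdiv_lt_0_compat; lra. }
  pose proof (log_ratio_rem_bound x ltac:(rewrite Rabs_pos_eq; lra)) as Hr.
  rewrite (Rabs_pos_eq x) in Hr by lra.
  assert (Hdiff : stirling_err (S m) - stirling_err m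
                  = x^4 / (3 * (1 - x^2)) - x^4/5 - log_ratio_rem x / (2*x)).
  { unfold stirling_err. rewrite ln_fact_S, S_INR. fold M.
    replace (ln (M + 1)) with (ln M + (ln (1 + x) - ln (1 - x))) by lra.
    unfold log_ratio_rem.
    replace M with ((1 - x) / (2*x)) by (unfold x; field; lra).
    field. repeat split; try lra. nra. }
  rewrite Hdiff.
  pose proof (stirling_step_core x _ Hx Hr) as [Hlo Hhi].
  split; [exact Hlo|].
  assert (x^4 <= /(M + 1)^4).
  { unfold x. rewrite pow_inv. apply Rinv_le_contravar; [apply pow_lt; lra|].
    apply pow_incr; lra. }
  pose proof (inv_pow4_le_inv_cube_sub M ltac:(lra)). lra.
Qed.

Lemma stirling_err_incr m j : (2 <= m)%nat ->
  0 <= stirling_err (m + j) - stirling_err m <= /INR m^3.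
Proof.
  intros Hm.
  enough (0 <= stirling_err (m + j) - stirling_err m <= /INR m^3 - /INR (m + j)^3).
  { assert (0 < /INR (m + j)^3) by (apply Rinv_0_lt_compat, pow_lt, lt_0_INR; lia). lra. }
  induction j as [|j IH]; [rewrite Nat.add_0_r; lra|].
  replace (m + S j)%nat with (S (m + j)) by lia.
  pose proof (stirling_err_step (m + j) ltac:(lia)). lra.
Qed.

Lemma mid_binom_fact m : mid_binom m * INR (fact m)^2 * 4^m = INR (fact (2 * m)).
Proof.
  induction m as [|m IH]; [simpl; ring|].
  replace (2 * S m)%nat with (S (S (2 * m))) by lia.
  change (fact (S (S (2 * m)))) with (S (S (2 * m)) * (S (2 * m) * fact (2 * m)))%nat.
  change (fact (S m)) with (S m * fact m)%nat.
  rewrite !mult_INR, <- IH, !S_INR, mult_INR. simpl mid_binom. simpl INR. simpl pow.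
  field. pose proof (pos_INR m). lra.
Qed.

Lemma ln_mid_binom m : (1 <= m)%nat ->
  2 * ln (mid_binom m) =
  2 * stirling_err (2 * m) - 4 * stirling_err m + ln 2 - ln (INR m) - /(4 * INR m).
Proof.
  intros Hm.
  assert (HM : 1 <= INR m) by (replace 1 with (INR 1) by reflexivity; apply le_INR; lia).
  pose proof (mid_binom_pos m). pose proof (INR_fact_lt_0 m).
  assert (Hln : ln_fact (2 * m) = ln (mid_binom m) + 2 * ln_fact m + INR m * (2 * ln 2)).
  { unfold ln_fact. rewrite <- mid_binom_fact.
    rewrite !ln_mult, !ln_pow by (try apply Rmult_lt_0_compat; try apply pow_lt; lra).
    replace 4 with (2 * 2) by ring. rewrite ln_mult by lra. simpl INR. ring. }
  unfold stirling_err. rewrite Hln, mult_INR. simpl INR.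
  replace (1 + 1) with 2 by ring. rewrite (ln_mult 2 (INR m)) by lra. field. lra.
Qed.

(* Wallis pins [stirling_err] to [stirling_const] up to [O(1/m)]. *)
Lemma stirling_err_near m : (2 <= m)%nat ->
  Rabs (stirling_err m - stirling_const) <= 2 / INR m.
Proof.
  intros Hm. destruct m as [|m']; [lia|].
  pose proof (ln_mid_binom (S m') ltac:(lia)) as Hmid.
  pose proof (wallis_upper m') as Hup. pose proof (wallis_lower (S m')) as Hlo.
  pose proof (stirling_err_incr (S m') (S m') ltac:(lia)) as Hinc.
  replace (S m' + S m')%nat with (2 * S m')%nat in Hinc by lia.
  set (m := S m') in *.
  assert (HM : 2 <= INR m) by (replace 2 with (INR 2) by (simpl; ring); apply le_INR; lia).
  pose proof (mid_binom_pos m). pose proof PI_RGT_0.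
  assert (Hsq : 2 * ln (mid_binom m) = ln (mid_binom m ^ 2))
    by (rewrite ln_pow by lra; simpl; ring).
  assert (Hup' : ln PI + ln (INR m) + 2 * ln (mid_binom m) <= 0).
  { rewrite Hsq, <- !ln_mult, <- ln_1 by (try apply pow_lt; nra).
    apply ln_le; [apply Rmult_lt_0_compat; [nra | apply pow_lt]|]; lra. }
  assert (Hlo' : ln 2 <= ln PI + ln (2 * INR m + 1) + 2 * ln (mid_binom m)).
  { rewrite Hsq, <- !ln_mult by (try apply pow_lt; nra). apply ln_le; lra. }
  assert (Hodd : ln (2 * INR m + 1) <= ln 2 + ln (INR m) + /(2 * INR m)).
  { replace (2 * INR m + 1) with (2 * INR m * (1 + /(2 * INR m))) by (field; lra).
    assert (0 < /(2 * INR m)) by (apply Rinv_0_lt_compat; lra).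
    rewrite !ln_mult by lra. pose proof (ln_le_sub1 (1 + /(2 * INR m))). lra. }
  assert (/(2 * INR m) = 2 * /(4 * INR m)) by (field; lra).
  assert (Hsmall : /(4 * INR m) + /INR m^3 <= 2 / INR m).
  { unfold Rdiv. assert (/INR m^3 <= /INR m).
    { apply Rinv_le_contravar; [lra|].
      replace (INR m ^ 3) with (INR m * INR m * INR m) by ring. nra. }
    assert (/(4 * INR m) <= /INR m) by (apply Rinv_le_contravar; lra). lra. }
  apply Rabs_le_between. unfold stirling_const. lra.
Qed.

Lemma stirling_err_bounds m : (2 <= m)%nat ->
  stirling_const - /INR m^3 <= stirling_err m <= stirling_const.
Proof.
  intros Hm.
  assert (Hlim : forall eps, 0 < eps -> exists j,
             Rabs (stirling_err (m + j) - stirling_const) < eps).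
  { intros eps Heps. destruct (INR_archimed eps 2 Heps) as [j Hj]. exists j.
    assert (Hmj : 0 < INR (m + j)) by (apply lt_0_INR; lia).
    assert (INR j <= INR (m + j)) by (apply le_INR; lia).
    eapply Rle_lt_trans; [apply stirling_err_near; lia|].
    apply (Rmult_lt_reg_r (INR (m + j))); [lra|].
    unfold Rdiv. rewrite Rmult_assoc, Rinv_l by lra. nra. }
  split.
  - destruct (Rle_lt_dec (stirling_const - /INR m^3) (stirling_err m)) as [H|H]; [exact H|].
    destruct (Hlim (stirling_const - /INR m^3 - stirling_err m)) as [j Hj]; [lra|].
    apply Rabs_def2 in Hj. pose proof (stirling_err_incr m j Hm). lra.
  - destruct (Rle_lt_dec (stirling_err m) stirling_const) as [H|H]; [exact H|].
    destruct (Hlim (stirling_err m - stirling_const)) as [j Hj]; [lra|].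
    apply Rabs_def2 in Hj. pose proof (stirling_err_incr m j Hm). lra.
Qed.

(** * Expectations under Binom(n, 1/2) *)

Lemma C_pos n k : 0 < Binomial.C n k.
Proof.
  unfold Binomial.C. apply Rdiv_lt_0_compat; [apply INR_fact_lt_0|].
  apply Rmult_lt_0_compat; apply INR_fact_lt_0.
Qed.

Lemma binom_half_pmf_pos n k : 0 < binom_half_pmf n k.
Proof. apply Rdiv_lt_0_compat; [apply C_pos | apply pow_lt; lra]. Qed.

Definition Csum (n : nat) (g : nat -> R) := sum_f_R0 (fun k => Binomial.C n k * g k) n.

Lemma Csum_S n g : Csum (S n) g = Csum n g + Csum n (fun k => g (S k)).
Proof.
  unfold Csum. destruct n as [|n].
  - simpl. rewrite !C_n_0. replace (Binomial.C 1 1) with 1 by (rewrite C_n_n; reflexivity). ring.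
  - rewrite (decomp_sum _ (S (S n))) by lia. simpl pred.
    rewrite tech5, (decomp_sum (fun k => Binomial.C (S n) k * g k) (S n)) by lia. simpl pred.
    rewrite (tech5 (fun k => Binomial.C (S n) k * g (S k)) n), !C_n_0, !C_n_n.
    rewrite (sum_eq (fun i => Binomial.C (S (S n)) (S i) * g (S i))
               (fun i => Binomial.C (S n) i * g (S i) + Binomial.C (S n) (S i) * g (S i)))
      by (intros i Hi; rewrite <- pascal by lia; ring).
    rewrite sum_plus. ring.
Qed.

Definition Ebin (n : nat) (g : nat -> R) := sum_f_R0 (fun k => binom_half_pmf n k * g k) n.

Lemma Ebin_Csum n g : Ebin n g = Csum n g / 2 ^ n.
Proof.
  unfold Ebin, Csum, binom_half_pmf, Rdiv. rewrite Rmult_comm, scal_sum.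
  apply sum_eq. intros; ring.
Qed.

Lemma Ebin_0 g : Ebin 0 g = g 0%nat.
Proof. rewrite Ebin_Csum. unfold Csum. simpl. rewrite C_n_0. field. Qed.

Lemma Ebin_S n g : Ebin (S n) g = /2 * (Ebin n g + Ebin n (fun k => g (S k))).
Proof. rewrite !Ebin_Csum, Csum_S. simpl pow. field. apply pow_nonzero. lra. Qed.

Lemma Ebin_ext n g h : (forall k, (k <= n)%nat -> g k = h k) -> Ebin n g = Ebin n h.
Proof. intros H. apply sum_eq. intros. rewrite H; auto. Qed.

Lemma Ebin_plus n g h : Ebin n (fun k => g k + h k) = Ebin n g + Ebin n h.
Proof. unfold Ebin. rewrite <- sum_plus. apply sum_eq. intros; ring. Qed.

Lemma Ebin_scal n a g : Ebin n (fun k => a * g k) = a * Ebin n g.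
Proof. unfold Ebin. rewrite scal_sum. apply sum_eq. intros; ring. Qed.

Lemma Ebin_minus n g h : Ebin n (fun k => g k - h k) = Ebin n g - Ebin n h.
Proof.
  unfold Rminus. rewrite Ebin_plus, (Ebin_ext n (fun k => - h k) (fun k => -1 * h k))
    by (intros; ring).
  rewrite Ebin_scal. ring.
Qed.

Lemma Ebin_const n c : Ebin n (fun _ => c) = c.
Proof. induction n as [|n IH]; [apply Ebin_0|]. rewrite Ebin_S, IH. field. Qed.

Lemma Ebin_le n g h : (forall k, (k <= n)%nat -> g k <= h k) -> Ebin n g <= Ebin n h.
Proof.
  intros H. apply sum_Rle. intros k Hk.
  apply Rmult_le_compat_l; [apply Rlt_le, binom_half_pmf_pos | auto].
Qed.

Lemma Ebin_abs n g : Rabs (Ebin n g) <= Ebin n (fun k => Rabs (g k)).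
Proof.
  eapply Rle_trans; [apply Rsum_abs|]. right. apply sum_eq. intros.
  rewrite Rabs_mult, (Rabs_pos_eq (binom_half_pmf _ _)) by apply Rlt_le, binom_half_pmf_pos.
  reflexivity.
Qed.

Definition centered (n k : nat) := 2 * INR k - INR n.
Definition cmoment (n j : nat) := Ebin n (fun k => centered n k ^ j).

(* [peval l i x] and [pmoment l i n] read the list [l] as the coefficients of
   [sum_t l_t x^(i+t)], evaluated at [x] resp. integrated against [centered n]. *)
Fixpoint peval (l : list R) (i : nat) (x : R) : R :=
  match l with nil => 0 | c :: l' => c * x ^ i + peval l' (S i) x end.
Fixpoint pmoment (l : list R) (i n : nat) : R :=
  match l with nil => 0 | c :: l' => c * cmoment n i + pmoment l' (S i) n end.

Lemma Ebin_peval n l i : Ebin n (fun k => peval l i (centered n k)) = pmoment l i n.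
Proof.
  revert i. induction l as [|c l IH]; intros i; simpl; [apply Ebin_const|].
  rewrite Ebin_plus, Ebin_scal, IH. reflexivity.
Qed.

Lemma cmoment_S n j l : (forall x, /2 * ((x - 1)^j + (x + 1)^j) = peval l 0 x) ->
  cmoment (S n) j = pmoment l 0 n.
Proof.
  intros Hl. unfold cmoment. rewrite Ebin_S, <- Ebin_plus, <- Ebin_scal, <- Ebin_peval.
  apply Ebin_ext. intros k _. rewrite <- Hl. unfold centered. rewrite !S_INR.
  f_equal. f_equal; f_equal; ring.
Qed.

Lemma cmoment_0 n : cmoment n 0 = 1.
Proof. exact (Ebin_const n 1). Qed.

(* [l] lists the coefficients of [((x - 1)^j + (x + 1)^j) / 2], so that [cmoment_S]
   expresses the [j]-th moment at [n+1] through lower moments at [n]. *)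
Ltac cmoment_induction l :=
  let n := fresh "n" in let IH := fresh "IH" in
  intro n; induction n as [|n IH];
  [ unfold cmoment; rewrite Ebin_0; unfold centered; simpl; ring
  | rewrite (cmoment_S n _ l) by (intros; cbn [peval]; field); cbn [pmoment];
    repeat match goal with H : forall m, cmoment m _ = _ |- _ => rewrite H end;
    rewrite ?cmoment_0, IH, ?S_INR; ring ].

Lemma cmoment_2 : forall n, cmoment n 2 = INR n.
Proof. cmoment_induction [1; 0; 1]. Qed.

Lemma cmoment_4 : forall n, cmoment n 4 = 3 * INR n ^ 2 - 2 * INR n.
Proof. pose proof cmoment_2. cmoment_induction [1; 0; 6; 0; 1]. Qed.

Lemma cmoment_6 : forall n, cmoment n 6 = 15 * INR n ^ 3 - 30 * INR n ^ 2 + 16 * INR n.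
Proof. pose proof cmoment_2. pose proof cmoment_4. cmoment_induction [1; 0; 15; 0; 15; 0; 1]. Qed.

Lemma cmoment_8 : forall n,
  cmoment n 8 = 105 * INR n ^ 4 - 420 * INR n ^ 3 + 588 * INR n ^ 2 - 272 * INR n.
Proof.
  pose proof cmoment_2. pose proof cmoment_4. pose proof cmoment_6.
  cmoment_induction [1; 0; 28; 0; 70; 0; 28; 0; 1].
Qed.

Lemma cmoment_10 : forall n, cmoment n 10 = 945 * INR n ^ 5 - 6300 * INR n ^ 4
  + 16380 * INR n ^ 3 - 18960 * INR n ^ 2 + 7936 * INR n.
Proof.
  pose proof cmoment_2. pose proof cmoment_4. pose proof cmoment_6. pose proof cmoment_8.
  cmoment_induction [1; 0; 45; 0; 210; 0; 210; 0; 45; 0; 1].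
Qed.

Lemma cmoment_12 : forall n, cmoment n 12 = 10395 * INR n ^ 6 - 103950 * INR n ^ 5
  + 429660 * INR n ^ 4 - 893640 * INR n ^ 3 + 911328 * INR n ^ 2 - 353792 * INR n.
Proof.
  pose proof cmoment_2. pose proof cmoment_4. pose proof cmoment_6. pose proof cmoment_8.
  pose proof cmoment_10. cmoment_induction [1; 0; 66; 0; 495; 0; 924; 0; 495; 0; 66; 0; 1].
Qed.

(** * The information density *)

Lemma C_ge_1 n k : (k <= n)%nat -> 1 <= Binomial.C n k.
Proof.
  revert k. induction n as [|n IH]; intros k Hk.
  - replace k with 0%nat by lia. rewrite C_n_0. lra.
  - destruct k as [|k]; [rewrite C_n_0; lra|].
    destruct (Nat.eq_dec k n) as [->|Hne]; [rewrite C_n_n; lra|].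
    rewrite <- pascal by lia. pose proof (IH k ltac:(lia)). pose proof (C_pos n (S k)). lra.
Qed.

Lemma sum_f_R0_ge_term (a : nat -> R) k N :
  (forall i, 0 <= a i) -> (k <= N)%nat -> a k <= sum_f_R0 a N.
Proof.
  intros Ha Hk. induction N as [|N IH].
  - replace k with 0%nat by lia. simpl. lra.
  - rewrite tech5. destruct (Nat.eq_dec k (S N)) as [->|Hne].
    + pose proof (cond_pos_sum a N Ha). lra.
    + pose proof (IH ltac:(lia)). pose proof (Ha (S N)). lra.
Qed.

Lemma C_le_pow2 n k : (k <= n)%nat -> Binomial.C n k <= 2 ^ n.
Proof.
  intros Hk. replace 2 with (1 + 1) by ring. rewrite binomial.
  replace (Binomial.C n k) with (Binomial.C n k * 1 ^ k * 1 ^ (n - k)) by (rewrite !pow1; ring).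
  apply (sum_f_R0_ge_term (fun i => Binomial.C n i * 1 ^ i * 1 ^ (n - i))); auto.
  intros. rewrite !pow1. pose proof (C_pos n i). lra.
Qed.

Lemma binom_half_info_eq n k : binom_half_info n k = INR n * ln 2 - ln (Binomial.C n k).
Proof.
  unfold binom_half_info, binom_half_pmf.
  pose proof (C_pos n k). assert (0 < 2 ^ n) by (apply pow_lt; lra).
  rewrite ln_Rinv by (apply Rdiv_lt_0_compat; lra).
  rewrite ln_div, ln_pow by lra. ring.
Qed.

Lemma binom_half_info_bounds n k : (k <= n)%nat -> 0 <= binom_half_info n k <= INR n * ln 2.
Proof.
  intros Hk. rewrite binom_half_info_eq.
  pose proof (C_ge_1 n k Hk). pose proof (C_le_pow2 n k Hk).
  assert (0 <= ln (Binomial.C n k)) by (rewrite <- ln_1; apply ln_le; lra).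
  assert (ln (Binomial.C n k) <= INR n * ln 2) by (rewrite <- ln_pow by lra; apply ln_le; lra).
  lra.
Qed.

Lemma ln_C n k : ln (Binomial.C n k) = ln_fact n - ln_fact k - ln_fact (n - k).
Proof.
  unfold Binomial.C, ln_fact.
  pose proof (INR_fact_lt_0 n). pose proof (INR_fact_lt_0 k). pose proof (INR_fact_lt_0 (n - k)).
  rewrite ln_div, ln_mult by (try apply Rmult_lt_0_compat; lra). ring.
Qed.

Definition info_center (n : nat) := /2 * ln (PI * INR n / 2).

Definition info_dev (n k : nat) := binom_half_info n k - info_center n.

(* Second-order expansion of [info_dev n k] in [N = n] and [u = (2k - n)/n]: Stirling for
   [k!], [(n-k)!], [n!] together with the Taylor expansions of [sym_xlnx] and [ln (1 - u^2)]. *)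
Definition info_poly (N u : R) :=
  N/2 * (u^2 + u^4/6 + u^6/15) - u^2/2 - u^4/4 + (1 + u^2) / (3*N) - /(12*N).

Definition info_err_central (N u : R) := N * u^8 + u^6 + u^4/N + /N^3.

Definition info_err (N u : R) := N^2 * u^10 + N * u^8 + u^6 + u^4/N + u^2/N^2 + /N^3.

Lemma info_center_bounds n : (1 <= n)%nat -> 0 <= info_center n <= INR n.
Proof.
  intros Hn. unfold info_center.
  assert (HN : 1 <= INR n) by (replace 1 with (INR 1) by reflexivity; apply le_INR; lia).
  pose proof PI2_3_2. pose proof PI_4.
  assert (Hp : 1 <= PI * INR n / 2) by nra.
  pose proof (ln_le_sub1 (PI * INR n / 2) ltac:(lra)).
  assert (0 <= ln (PI * INR n / 2)) by (rewrite <- ln_1; apply ln_le; lra).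
  split; nra.
Qed.

Lemma info_err_terms_nonneg N u : 0 < N ->
  0 <= N^2 * u^10 /\ 0 <= N * u^8 /\ 0 <= u^6 /\ 0 <= u^4/N /\ 0 <= u^2/N^2 /\ 0 < /N^3.
Proof.
  intros HN.
  pose proof (pow_even_nonneg u 1 : 0 <= u^2). pose proof (pow_even_nonneg u 2 : 0 <= u^4).
  pose proof (pow_even_nonneg u 3 : 0 <= u^6). pose proof (pow_even_nonneg u 4 : 0 <= u^8).
  pose proof (pow_even_nonneg u 5 : 0 <= u^10).
  repeat split; try nra.
  - apply Rdiv_le_0_compat; lra.
  - apply Rdiv_le_0_compat; [lra | apply pow_lt; lra].
  - apply Rinv_0_lt_compat, pow_lt; lra.
Qed.

Lemma info_err_central_le N u : 0 < N -> 0 <= info_err_central N u <= info_err N u.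
Proof.
  intros HN. pose proof (info_err_terms_nonneg N u HN).
  unfold info_err_central, info_err. lra.
Qed.

Lemma info_err_ge N u : 0 < N -> N^2 * u^10 <= info_err N u.
Proof.
  intros HN. pose proof (info_err_terms_nonneg N u HN). unfold info_err. lra.
Qed.

Lemma INR_of_centered_ratio n k u : (1 <= n)%nat -> (k <= n)%nat ->
  u = centered n k / INR n -> INR k = INR n * (1 + u) / 2 /\ INR (n - k) = INR n * (1 - u) / 2.
Proof.
  intros Hn Hk Hu.
  assert (0 < INR n) by (apply lt_0_INR; lia).
  assert (Hkv : INR k = INR n * (1 + u) / 2) by (rewrite Hu; unfold centered; field; lra).
  split; [exact Hkv|]. rewrite minus_INR, Hkv by lia. field.
Qed.

Lemma centered_ratio_sq_le_1 n k u : (1 <= n)%nat -> (k <= n)%nat ->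
  u = centered n k / INR n -> u^2 <= 1.
Proof.
  intros Hn Hk Hu. destruct (INR_of_centered_ratio n k u Hn Hk Hu) as [Hkv Hnkv].
  assert (0 < INR n) by (apply lt_0_INR; lia). pose proof (pos_INR k). pose proof (pos_INR (n - k)).
  assert (-1 <= u <= 1) by (split; nra). nra.
Qed.

Lemma info_dev_decomp n k u : (8 <= n)%nat -> (k <= n)%nat ->
  u = centered n k / INR n -> Rabs u <= /2 ->
  info_dev n k - info_poly (INR n) u =
  INR n / 2 * sym_xlnx_rem u + /2 * ln_one_sub_sq_rem u + u^4 / (3 * INR n * (1 - u^2))
  + ((stirling_err k - stirling_const) + (stirling_err (n - k) - stirling_const)
     - (stirling_err n - stirling_const)).
Proof.
  intros Hn Hk Hu Hub. apply Rabs_le_between in Hub.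
  destruct (INR_of_centered_ratio n k u ltac:(lia) Hk Hu) as [Hkv Hnkv].
  set (N := INR n) in *.
  pose proof (INR_ge_8 n Hn) as HN. fold N in HN.
  assert (Hln : forall v, -/2 <= v <= /2 -> ln (N * (1 + v) / 2) = ln N - ln 2 + ln (1 + v)).
  { intros v Hv. replace (N * (1 + v) / 2) with ((1 + v) * (N / 2)) by field.
    rewrite ln_mult, ln_div by (try apply Rdiv_lt_0_compat; lra). ring. }
  assert (Hsq : ln (1 - u^2) = ln (1 + u) + ln (1 - u)).
  { replace (1 - u^2) with ((1 + u) * (1 - u)) by ring. apply ln_mult; lra. }
  assert (Hcenter : info_center n = /2 * (ln PI + ln N - ln 2)).
  { unfold info_center. fold N. pose proof PI_RGT_0.
    rewrite ln_div by (try apply Rmult_lt_0_compat; lra). rewrite ln_mult by lra. ring. }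
  unfold info_dev. rewrite binom_half_info_eq, ln_C, Hcenter.
  unfold ln_fact, stirling_err. fold N. fold (ln_fact n) (ln_fact k) (ln_fact (n - k)).
  rewrite Hkv, Hnkv. replace (N * (1 - u) / 2) with (N * (1 + - u) / 2) by field.
  rewrite Hln, (Hln (- u)) by lra. replace (1 + - u) with (1 - u) by ring.
  unfold sym_xlnx_rem, sym_xlnx, ln_one_sub_sq_rem, info_poly, stirling_const. rewrite Hsq.
  field. repeat split; try lra. nra.
Qed.

Lemma stirling_err_comb_bound n k : (8 <= n)%nat -> INR n / 4 <= INR k ->
  INR n / 4 <= INR (n - k) ->
  Rabs ((stirling_err k - stirling_const) + (stirling_err (n - k) - stirling_const)
        - (stirling_err n - stirling_const)) <= 129 / INR n ^ 3.
Proof.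
  intros Hn Hk Hnk. set (N := INR n) in *.
  pose proof (INR_ge_8 n Hn) as HN. fold N in HN.
  assert (Hge2 : forall j, N / 4 <= INR j -> (2 <= j)%nat /\ / INR j ^ 3 <= 64 / N^3).
  { intros j Hj. split; [apply INR_le; simpl; lra|].
    replace (64 / N^3) with (/ (N/4)^3) by (field; lra).
    apply Rinv_le_contravar; [apply pow_lt; lra | apply pow_incr; lra]. }
  destruct (Hge2 k Hk) as [Hk2 Hik]. destruct (Hge2 (n - k)%nat Hnk) as [Hnk2 Hink].
  pose proof (stirling_err_bounds k Hk2). pose proof (stirling_err_bounds (n - k) Hnk2).
  pose proof (stirling_err_bounds n ltac:(lia)) as Hsn. fold N in Hsn.
  assert (0 < / N^3) by (apply Rinv_0_lt_compat, pow_lt; lra).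
  apply Rabs_le_between. unfold Rdiv in *. lra.
Qed.

Lemma info_dev_central n k u : (8 <= n)%nat -> (k <= n)%nat ->
  u = centered n k / INR n -> Rabs u <= /2 ->
  Rabs (info_dev n k - info_poly (INR n) u) <= 129 * info_err_central (INR n) u.
Proof.
  intros Hn Hk Hu Hub.
  rewrite (info_dev_decomp n k u) by auto.
  pose proof (sym_xlnx_rem_bound u Hub) as H2. pose proof (ln_one_sub_sq_rem_bound u Hub) as H3.
  rewrite (pow_even_abs u 4 : Rabs u ^ 8 = u ^ 8) in H2.
  rewrite (pow_even_abs u 3 : Rabs u ^ 6 = u ^ 6) in H3.
  apply Rabs_le_between in Hub.
  destruct (INR_of_centered_ratio n k u ltac:(lia) Hk Hu) as [Hkv Hnkv].
  set (N := INR n) in *.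
  pose proof (INR_ge_8 n Hn) as HN. fold N in HN.
  pose proof (stirling_err_comb_bound n k Hn ltac:(fold N; nra) ltac:(fold N; nra)) as Hst.
  fold N in Hst.
  pose proof (pow_even_nonneg u 2 : 0 <= u^4).
  assert (Hrat : Rabs (u^4 / (3 * N * (1 - u^2))) <= 4/9 * (u^4 / N)).
  { assert (u^2 <= /4) by nra.
    replace (u^4 / (3 * N * (1 - u^2))) with (u^4 / N * /(3 * (1 - u^2))) by (field; split; lra).
    assert (0 < /(3 * (1 - u^2)) <= 4/9).
    { split; [apply Rinv_0_lt_compat; lra|].
      replace (4/9) with (/(9/4)) by field. apply Rinv_le_contravar; lra. }
    assert (0 <= u^4 / N) by (apply Rdiv_le_0_compat; lra).
    rewrite Rabs_pos_eq; nra. }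
  assert (HT2 : Rabs (N / 2 * sym_xlnx_rem u) <= 4/3 * (N * u^8)).
  { rewrite Rabs_mult, (Rabs_pos_eq (N / 2)) by lra. simpl in H2. nra. }
  assert (HT3 : Rabs (/2 * ln_one_sub_sq_rem u) <= 4/3 * u^6).
  { rewrite Rabs_mult, (Rabs_pos_eq (/2)) by lra. simpl in H3. lra. }
  pose proof (pow_even_nonneg u 3 : 0 <= u^6). pose proof (pow_even_nonneg u 4 : 0 <= u^8).
  assert (0 <= u^4 / N) by (apply Rdiv_le_0_compat; lra).
  assert (0 <= N * u^8) by nra.
  unfold info_err_central. unfold Rdiv in *.
  eapply Rle_trans; [apply Rabs_triang|].
  eapply Rle_trans; [apply Rplus_le_compat_r, Rabs_triang|].
  eapply Rle_trans; [apply Rplus_le_compat_r, Rplus_le_compat_r, Rabs_triang|].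
  lra.
Qed.

Lemma info_poly_bounds N u : 8 <= N -> u^2 <= 1 ->
  Rabs (info_poly N u) <= N /\ Rabs (info_poly N u) <= 2 * N * u^2 + 1.
Proof.
  intros HN Hu. unfold info_poly. set (v := u^2) in *.
  assert (Hv : 0 <= v) by apply pow2_ge_0.
  replace (u^4) with (v^2) by (unfold v; ring). replace (u^6) with (v^3) by (unfold v; ring).
  set (w := /N). assert (Hw : 0 < w <= /8).
  { split; [apply Rinv_0_lt_compat | apply Rinv_le_contravar]; lra. }
  replace ((1 + v) / (3 * N)) with ((1 + v) * w / 3) by (unfold w; field; lra).
  replace (/(12 * N)) with (w / 12) by (unfold w; field; lra).
  assert (0 <= v^2 <= v) by (simpl; nra). assert (0 <= v^3 <= v) by (simpl; nra).
  split; apply Rabs_le_between; nra.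
Qed.

Lemma info_approx_central n k u : (8 <= n)%nat -> (k <= n)%nat ->
  u = centered n k / INR n -> u^2 <= /4 ->
  Rabs (info_dev n k - info_poly (INR n) u) <= 40000 * info_err (INR n) u /\
  Rabs (info_dev n k ^ 2 - info_poly (INR n) u ^ 2) <= 40000 * info_err (INR n) u.
Proof.
  intros Hn Hk Hu Hu2.
  assert (Hub : Rabs u <= /2) by (apply Rabs_le_between; nra).
  pose proof (info_dev_central n k u Hn Hk Hu Hub) as Hdev.
  pose proof (sq_sub_sq_bound _ _ _ Hdev) as Hsq.
  set (N := INR n) in *.
  pose proof (INR_ge_8 n Hn) as HN. fold N in HN.
  pose proof (info_poly_bounds N u HN ltac:(lra)) as [_ HQ].
  pose proof (info_err_central_le N u ltac:(lra)) as [HB0 HBE].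
  pose proof (pow_even_nonneg u 1 : 0 <= u^2).
  assert (HBsmall : info_err_central N u <= N * u^2 + 1).
  { unfold info_err_central.
    assert (Hv3 : (u^2)^3 <= (/4)^3) by (apply pow_incr; lra). simpl in Hv3.
    assert (u^8 <= u^2 / 64) by (replace (u^8) with (u^2 * (u^2 * (u^2 * u^2))) by ring; nra).
    assert (u^6 <= /64) by (replace (u^6) with (u^2 * (u^2 * u^2)) by ring; lra).
    assert (u^4 / N <= /128).
    { replace (u^4) with ((u^2)^2) by ring. unfold Rdiv.
      assert (/N <= /8) by (apply Rinv_le_contravar; lra).
      assert (0 < /N) by (apply Rinv_0_lt_compat; lra). simpl. nra. }
    assert (/N^3 <= /512) by (apply Rinv_le_contravar; [lra | simpl; nra]).
    nra. }
  assert (HBprod : info_err_central N u * (N * u^2 + 1) <= 2 * info_err N u).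
  { unfold info_err_central, info_err.
    replace ((N * u^8 + u^6 + u^4/N + /N^3) * (N * u^2 + 1))
      with (N^2 * u^10 + 2 * (N * u^8) + 2 * u^6 + u^4/N + u^2/N^2 + /N^3) by (field; lra).
    pose proof (info_err_terms_nonneg N u ltac:(lra)). lra. }
  split; [lra|].
  eapply Rle_trans; [exact Hsq|].
  apply Rle_trans with (129 * info_err_central N u * (133 * (N * u^2 + 1))); [|nra].
  apply Rmult_le_compat_l; nra.
Qed.

Lemma info_approx_tail n k u : (8 <= n)%nat -> (k <= n)%nat ->
  u = centered n k / INR n -> /4 < u^2 ->
  Rabs (info_dev n k - info_poly (INR n) u) <= 40000 * info_err (INR n) u /\
  Rabs (info_dev n k ^ 2 - info_poly (INR n) u ^ 2) <= 40000 * info_err (INR n) u.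
Proof.
  intros Hn Hk Hu Hu2.
  pose proof (binom_half_info_bounds n k Hk) as Hinfo.
  pose proof (info_center_bounds n ltac:(lia)) as Hcenter.
  pose proof (centered_ratio_sq_le_1 n k u ltac:(lia) Hk Hu) as Hu1.
  set (N := INR n) in *.
  pose proof (INR_ge_8 n Hn) as HN. fold N in HN.
  pose proof (info_poly_bounds N u HN Hu1) as [HQ _].
  pose proof (ln_le_sub1 2 ltac:(lra)).
  assert (Hdev : Rabs (info_dev n k) <= 2 * N) by (apply Rabs_le_between; unfold info_dev; nra).
  assert (Hdiff : Rabs (info_dev n k - info_poly N u) <= 3 * N).
  { unfold Rminus. eapply Rle_trans; [apply Rabs_triang|]. rewrite Rabs_Ropp. lra. }
  pose proof (sq_sub_sq_bound _ _ _ Hdiff) as Hsq.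
  assert (Hlead : 1 <= 1024 * u^10).
  { replace (u^10) with ((u^2)^5) by ring.
    assert ((/4)^5 <= (u^2)^5) by (apply pow_incr; lra). simpl in *. lra. }
  pose proof (info_err_ge N u ltac:(lra)).
  assert (N^2 <= N^2 * (1024 * u^10)) by (pose proof (pow2_ge_0 N); nra).
  pose proof (Rabs_pos (info_poly N u)).
  split; nra.
Qed.

Lemma info_approx n k : (8 <= n)%nat -> (k <= n)%nat ->
  let u := centered n k / INR n in
  Rabs (info_dev n k - info_poly (INR n) u) <= 40000 * info_err (INR n) u /\
  Rabs (info_dev n k ^ 2 - info_poly (INR n) u ^ 2) <= 40000 * info_err (INR n) u.
Proof.
  intros Hn Hk u.
  destruct (Rle_lt_dec (u^2) (/4)).
  - apply info_approx_central; auto.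
  - apply info_approx_tail; auto.
Qed.

Definition even_poly (a b c d : R) := [a; 0; b; 0; c; 0; d].

Definition even_poly_sq (a b c d : R) :=
  [a^2; 0; 2*a*b; 0; b^2 + 2*a*c; 0; 2*a*d + 2*b*c; 0; c^2 + 2*b*d; 0; 2*c*d; 0; d^2].

Lemma peval_even_poly_sq a b c d s :
  peval (even_poly a b c d) 0 s ^ 2 = peval (even_poly_sq a b c d) 0 s.
Proof. cbn [peval even_poly even_poly_sq]. ring. Qed.

Lemma info_poly_peval N s : 0 < N -> info_poly N (s / N) =
  peval (even_poly (/(4*N)) (/(2*N) - /(2*N^2) + /(3*N^3)) (/(12*N^3) - /(4*N^4)) (/(30*N^5)))
        0 s.
Proof. intros. unfold info_poly, even_poly. cbn [peval]. field. lra. Qed.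

Lemma info_err_peval N s : 0 < N ->
  info_err N (s / N) = peval [/N^3; 0; /N^4; 0; /N^5; 0; /N^6; 0; /N^7; 0; /N^8] 0 s.
Proof. intros. unfold info_err. cbn [peval]. field. lra. Qed.

Definition mean_info_poly (w : R) := /2 - w^2/12 - w^3/2 + 8 * w^4/15.

Definition var_info_poly_rem (w : R) :=
  - 16/3 * w^3 + 364/45 * w^4 - 13/45 * w^5 + 14981/90 * w^6 - 29491/45 * w^7
  + 198008/225 * w^8 - 88448/225 * w^9.

Lemma mean_info_poly_bound w : 0 < w <= /8 -> Rabs (mean_info_poly w) <= 1.
Proof.
  intros Hw. pose proof (pow_le_cube w 1 ltac:(lra) : 0 <= w^4 <= w^3).
  assert (0 <= w^2 <= 1) by (split; [apply pow_le | simpl]; nra).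
  assert (0 <= w^3 <= 1) by (split; [apply pow_le | simpl]; nra).
  apply Rabs_le_between. unfold mean_info_poly. lra.
Qed.

Lemma var_info_poly_rem_bound w : 0 < w <= /8 -> Rabs (var_info_poly_rem w) <= 2109 * w^3.
Proof.
  intros Hw.
  pose proof (pow_le_cube w 1 ltac:(lra) : 0 <= w^4 <= w^3).
  pose proof (pow_le_cube w 2 ltac:(lra) : 0 <= w^5 <= w^3).
  pose proof (pow_le_cube w 3 ltac:(lra) : 0 <= w^6 <= w^3).
  pose proof (pow_le_cube w 4 ltac:(lra) : 0 <= w^7 <= w^3).
  pose proof (pow_le_cube w 5 ltac:(lra) : 0 <= w^8 <= w^3).
  pose proof (pow_le_cube w 6 ltac:(lra) : 0 <= w^9 <= w^3).
  apply Rabs_le_between. unfold var_info_poly_rem. lra.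
Qed.

Lemma Ebin_info_poly n : (8 <= n)%nat ->
  Ebin n (fun k => info_poly (INR n) (centered n k / INR n)) = mean_info_poly (/ INR n).
Proof.
  intros Hn. pose proof (INR_ge_8 n Hn).
  rewrite (Ebin_ext n _ _ (fun k _ => info_poly_peval (INR n) (centered n k) ltac:(lra))).
  rewrite Ebin_peval. cbn [pmoment even_poly].
  rewrite cmoment_0, cmoment_2, cmoment_4, cmoment_6. unfold mean_info_poly. field. lra.
Qed.

Lemma Ebin_info_poly_sq n : (8 <= n)%nat -> let w := / INR n in
  Ebin n (fun k => info_poly (INR n) (centered n k / INR n) ^ 2) =
  mean_info_poly w ^ 2 + (/2 - w/2 - w^2/2) + var_info_poly_rem w.
Proof.
  intros Hn w. pose proof (INR_ge_8 n Hn).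
  rewrite (Ebin_ext n _ _ (fun k _ => eq_trans (f_equal (fun x => x ^ 2)
             (info_poly_peval (INR n) (centered n k) ltac:(lra))) (peval_even_poly_sq _ _ _ _ _))).
  rewrite Ebin_peval. cbn [pmoment even_poly_sq].
  rewrite cmoment_0, cmoment_2, cmoment_4, cmoment_6, cmoment_8, cmoment_10, cmoment_12.
  unfold w, mean_info_poly, var_info_poly_rem. field. lra.
Qed.

Lemma Ebin_info_err n : (8 <= n)%nat ->
  Ebin n (fun k => info_err (INR n) (centered n k / INR n)) <= 26000 * (/ INR n)^3.
Proof.
  intros Hn. pose proof (INR_ge_8 n Hn).
  rewrite (Ebin_ext n _ _ (fun k _ => info_err_peval (INR n) (centered n k) ltac:(lra))).
  rewrite Ebin_peval. cbn [pmoment].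
  rewrite cmoment_0, cmoment_2, cmoment_4, cmoment_6, cmoment_8, cmoment_10.
  set (w := / INR n).
  assert (Hw : 0 < w <= /8) by (split; [apply Rinv_0_lt_compat | apply Rinv_le_contravar]; lra).
  match goal with |- ?L <= _ => replace L
   with (w^3 + w^3 + (3 * w^3 - 2 * w^4) + (15 * w^3 - 30 * w^4 + 16 * w^5)
     + (105 * w^3 - 420 * w^4 + 588 * w^5 - 272 * w^6)
     + (945 * w^3 - 6300 * w^4 + 16380 * w^5 - 18960 * w^6 + 7936 * w^7))
   by (unfold w; field; lra) end.
  pose proof (pow_le_cube w 1 ltac:(lra) : 0 <= w^4 <= w^3).
  pose proof (pow_le_cube w 2 ltac:(lra) : 0 <= w^5 <= w^3).
  pose proof (pow_le_cube w 3 ltac:(lra) : 0 <= w^6 <= w^3).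
  pose proof (pow_le_cube w 4 ltac:(lra) : 0 <= w^7 <= w^3).
  lra.
Qed.

(** * Entropy and varentropy *)

Lemma info_dev_moments_approx n : (8 <= n)%nat ->
  Rabs (Ebin n (info_dev n) - Ebin n (fun k => info_poly (INR n) (centered n k / INR n)))
    <= 40000 * 26000 * (/ INR n)^3 /\
  Rabs (Ebin n (fun k => info_dev n k ^ 2)
        - Ebin n (fun k => info_poly (INR n) (centered n k / INR n) ^ 2))
    <= 40000 * 26000 * (/ INR n)^3.
Proof.
  intros Hn. pose proof (Ebin_info_err n Hn).
  rewrite <- !Ebin_minus.
  split; (eapply Rle_trans; [apply Ebin_abs|]);
    (eapply Rle_trans; [apply Ebin_le; intros k Hk; apply (info_approx n k Hn Hk)|]);
    rewrite Ebin_scal; lra.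
Qed.

Lemma Ebin_info_dev n : Ebin n (info_dev n) = binom_half_entropy n - info_center n.
Proof. unfold info_dev. rewrite Ebin_minus, Ebin_const. reflexivity. Qed.

Lemma varentropy_eq n :
  binom_half_varentropy n = Ebin n (fun k => info_dev n k ^ 2) - Ebin n (info_dev n) ^ 2.
Proof.
  rewrite Ebin_info_dev. unfold binom_half_varentropy. fold (Ebin n (fun k =>
    (binom_half_info n k - binom_half_entropy n) ^ 2)).
  set (H := binom_half_entropy n). set (A := info_center n).
  rewrite (Ebin_ext n _ (fun k => info_dev n k ^ 2 + (-2 * (H - A) * info_dev n k + (H - A)^2)))
    by (intros; unfold info_dev; fold A; ring).
  rewrite Ebin_plus, Ebin_plus, Ebin_scal, Ebin_const, Ebin_info_dev. fold H A. ring.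
Qed.

Lemma ln_entropy_leading n : (1 <= n)%nat -> /2 * ln (PI * exp 1 * INR n / 2) = info_center n + /2.
Proof.
  intros Hn. unfold info_center. pose proof PI_RGT_0.
  assert (1 <= INR n) by (replace 1 with (INR 1) by reflexivity; apply le_INR; lia).
  replace (PI * exp 1 * INR n / 2) with (exp 1 * (PI * INR n / 2)) by field.
  rewrite ln_mult, ln_exp by (try apply exp_pos; apply Rdiv_lt_0_compat; nra). lra.
Qed.

Lemma entropy_expansion n : (8 <= n)%nat ->
  Rabs (binom_half_entropy n - (/2 * ln (PI * exp 1 * INR n / 2) - / (12 * INR n ^ 2)))
    <= (40000 * 26000 + 1) / INR n ^ 3.
Proof.
  intros Hn. pose proof (INR_ge_8 n Hn).
  destruct (info_dev_moments_approx n Hn) as [Happrox _].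
  rewrite Ebin_info_poly, Ebin_info_dev in Happrox by exact Hn.
  rewrite ln_entropy_leading by lia.
  set (w := / INR n) in *.
  assert (Hw : 0 < w <= /8) by (split; [apply Rinv_0_lt_compat | apply Rinv_le_contravar]; lra).
  replace (/ (12 * INR n ^ 2)) with (w^2/12) by (unfold w; field; lra).
  replace ((40000 * 26000 + 1) / INR n ^ 3) with ((40000 * 26000 + 1) * w^3)
    by (unfold w; field; lra).
  pose proof (pow_le_cube w 1 ltac:(lra) : 0 <= w^4 <= w^3).
  unfold mean_info_poly in Happrox.
  apply Rabs_le_between. apply Rabs_le_between in Happrox. lra.
Qed.

Lemma varentropy_expansion n : (8 <= n)%nat ->
  Rabs (binom_half_varentropy n - (/2 - / (2 * INR n) - / (2 * INR n ^ 2)))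
    <= (2109 + 40000 * 26000 * (4 + 40000 * 26000)) / INR n ^ 3.
Proof.
  intros Hn. pose proof (INR_ge_8 n Hn).
  destruct (info_dev_moments_approx n Hn) as [Hmean Hsq].
  rewrite Ebin_info_poly in Hmean by exact Hn. rewrite Ebin_info_poly_sq in Hsq by exact Hn.
  rewrite varentropy_eq.
  set (w := / INR n) in *.
  assert (Hw : 0 < w <= /8) by (split; [apply Rinv_0_lt_compat | apply Rinv_le_contravar]; lra).
  replace (/ (2 * INR n)) with (w/2) by (unfold w; field; lra).
  replace (/ (2 * INR n ^ 2)) with (w^2/2) by (unfold w; field; lra).
  replace ((2109 + 40000 * 26000 * (4 + 40000 * 26000)) / INR n ^ 3)
    with ((2109 + 40000 * 26000 * (4 + 40000 * 26000)) * w^3) by (unfold w; field; lra).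
  pose proof (var_info_poly_rem_bound w Hw) as HR. pose proof (mean_info_poly_bound w Hw) as HE.
  set (K := 40000 * 26000) in *.
  set (E := mean_info_poly w) in *. set (Rw := var_info_poly_rem w) in *.
  set (d := Ebin n (info_dev n) - E) in *.
  set (d2 := Ebin n (fun k => info_dev n k ^ 2) - (E^2 + (/2 - w/2 - w^2/2) + Rw)) in *.
  assert (HK : 0 < K) by (unfold K; lra).
  assert (Hw3 : w^3 <= 1) by (simpl; nra).
  assert (Hd : Rabs d <= K) by nra.
  assert (Hdd : Rabs (d * (2 * E + d)) <= K * w^3 * (3 + K)).
  { rewrite Rabs_mult. apply Rmult_le_compat; try apply Rabs_pos; [exact Hmean|].
    eapply Rle_trans; [apply Rabs_triang|]. rewrite Rabs_mult, (Rabs_pos_eq 2) by lra. lra. }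
  replace (Ebin n (fun k => info_dev n k ^ 2) - Ebin n (info_dev n) ^ 2 - (/2 - w/2 - w^2/2))
    with (Rw + d2 + - (d * (2 * E + d))) by (unfold d, d2; ring).
  eapply Rle_trans; [apply Rabs_triang|]. rewrite Rabs_Ropp.
  eapply Rle_trans; [apply Rplus_le_compat_r, Rabs_triang|].
  replace ((2109 + K * (4 + K)) * w^3) with (2109 * w^3 + K * w^3 + K * w^3 * (3 + K)) by ring.
  lra.
Qed.

Theorem lemma6 :
  (exists K : R, exists N : nat, forall n : nat, (N <= n)%nat -> (0 < n)%nat ->
     Rabs (binom_half_entropy n
           - (/ 2 * ln (PI * exp 1 * INR n / 2) - / (12 * INR n ^ 2)))
     <= K / INR n ^ 3) /\
  (exists K : R, exists N : nat, forall n : nat, (N <= n)%nat -> (0 < n)%nat ->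
     Rabs (binom_half_varentropy n
           - (/ 2 - / (2 * INR n) - / (2 * INR n ^ 2)))
     <= K / INR n ^ 3).
Proof.
  split; eexists; exists 8%nat; intros n Hn _.
  - exact (entropy_expansion n Hn).
  - exact (varentropy_expansion n Hn).
Qed.
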